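(* Let $\mathbb{F}$ be a field, $n\ge1$ and $k\ge2$. The maps $\mathcal{F}\mapsto\varphi(\mathcal{F})$ and $S\mapsto\psi(S)$ are mutually inverse bijections between the set of all flags in $\mathbb{F}^n$ of length $k$ and the set of all $k$-maximal nilpotent subsemigroups of $M(n,\mathbb{F})$.
   Context: $M(n,\mathbb{F})$ is the semigroup of $n\times n$ matrices over $\mathbb{F}$, identified with linear operators on $\mathbb{F}^n$. A flag of length $k$ is a chain $0=V_0\subsetneq V_1\subsetneq\cdots\subsetneq V_k=\mathbb{F}^n$ of subspaces; $\varphi(\mathcal{F})=\{a\in M(n,\mathbb{F}) : a(V_i)\subseteq V_{i-1}\ \forall i\}$. A semigroup $S$ with zero is nilpotent of nilpotency degree $k$ if all products of $k$ elements vanish and some product of $k-1$ elements does not. For a nilpotent subsemigroup $S$ of nilpotency degree $k$, with $S^i(\mathbb{F}^n)=\{a_1\cdots a_i(v): a_j\in S, v\in\mathbb{F}^n\}$ and $\langle\cdot\rangle$ the linear span, $\psi(S)$ is the flag $0\subset\langle S^{k-1}(\mathbb{F}^n)\rangle\subset\cdots\subset\langle S(\mathbb{F}^n)\rangle\subset\mathbb{F}^n$. A nilpotent subsemigroup of nilpotency degree $k$ is $k$-maximal if it is not properly contained in another nilpotent subsemigroup of $M(n,\mathbb{F})$ of nilpotency degree $k$. *)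

From HB Require Import structures.
From mathcomp Require Import all_boot all_order all_algebra.
From Stdlib Require Import ClassicalEpsilon.
Set Implicit Arguments. Unset Strict Implicit. Unset Printing Implicit Defensive.
Import GRing.Theory.
Local Open Scope ring_scope.

(* F^n is the space of column vectors 'cV[F]_n; a matrix a acts as v |-> a *m v,
   so that the matrix product corresponds to composition of operators. *)
Section Defs.
Variables (F : fieldType) (n : nat).

Notation vec := 'cV[F]_n.
Notation mat := 'M[F]_n.

Definition mset := mat -> Prop.

Definition mprod (s : seq mat) : mat := foldr (fun a b => a *m b) 1%:M s.

Definition subsemigroup (S : mset) : Prop :=
  forall a b, S a -> S b -> S (a *m b).

Definition nilpotent_of_degree (S : mset) (k : nat) : Prop :=
  [/\ subsemigroup S,
      (forall s : seq mat, size s = k -> {in s, forall a, S a} -> mprod s = 0)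
    & (exists s : seq mat, [/\ size s = k.-1, {in s, forall a, S a} & mprod s != 0])].

Definition k_maximal (S : mset) (k : nat) : Prop :=
  nilpotent_of_degree S k /\
  (forall T : mset, nilpotent_of_degree T k -> (forall a, S a -> T a) ->
     forall a, T a -> S a).

Definition flagT (k : nat) := {ffun 'I_k.+1 -> {vspace vec}}.

Definition fl (k : nat) (f : flagT k) (i : nat) : {vspace vec} := f (inord i).

Definition is_flag (k : nat) (f : flagT k) : Prop :=
  [/\ fl f 0 = 0%VS, fl f k = fullv &
      forall i : nat, (i < k)%N -> (fl f i <= fl f i.+1)%VS /\ ~~ (fl f i.+1 <= fl f i)%VS].

Definition phi (k : nat) (f : flagT k) : mset :=
  fun a => forall i, (1 <= i <= k)%N ->
    forall v : vec, v \in fl f i -> a *m v \in fl f i.-1.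

Definition Spow (S : mset) (i : nat) : vec -> Prop :=
  fun v => exists (s : seq mat) (w : vec),
    [/\ size s = i, {in s, forall a, S a} & v = mprod s *m w].

Definition is_span (X : vec -> Prop) (V : {vspace vec}) : Prop :=
  (forall v, X v -> v \in V) /\
  (forall W : {vspace vec}, (forall v, X v -> v \in W) -> (V <= W)%VS).

Definition span_of (X : vec -> Prop) : {vspace vec} :=
  epsilon (inhabits 0%VS) (is_span X).

Definition psi (k : nat) (S : mset) : flagT k :=
  [ffun j : 'I_k.+1 =>
     if (j == 0 :> nat) then 0%VS
     else if (j == k :> nat) then fullv
     else span_of (Spow S (k - j))].

End Defs.

(** For each
    step, rank-one matrices in phi(V) send a vector outside V_j to any given
    vector of V_j; chaining them shows that phi(V)^(k-j)(F^n) spans V_j,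
    i.e. psi (phi V) = V.  If T is nilpotent of degree k and contains phi(V),
    the same rank-one maps give T^(k-j)(F^n) <= V_j by induction on j (a
    vector escaping V_(j+1) would be sent by T to a vector escaping V_j), so
    T lowers the flag and T = phi(V).  Conversely, for S nilpotent of degree
    k the spans W_i = <S^i(F^n)> decrease from F^n to 0, strictly because a
    stationary step would propagate up to W_(k-1) = 0; as S maps W_i into
    W_(i+1), psi(S) is a flag with S <= phi(psi S), and k-maximality of S
    forces equality. *)
From HB Require Import structures.
From mathcomp Require Import all_boot all_order all_algebra.
From mathcomp Require Import zify.
From Stdlib Require Import ClassicalEpsilon Classical FunctionalExtensionality PropExtensionality.
Set Implicit Arguments. Unset Strict Implicit. Unset Printing Implicit Defensive.
Import GRing.Theory.
Local Open Scope ring_scope.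

Lemma exists_scalar_separating (K : fieldType) (vT : vectType K)
    (U : {vspace vT}) (x : vT) :
  x \notin U -> exists g : {scalar vT}, g x = 1 /\ {in U, forall u, g u = 0}.
Proof.
move=> xU; pose X := cons_tuple x (vbasis U).
have freeX : free X.
  by rewrite /= free_cons (span_basis (vbasisP U)) xU (basis_free (vbasisP U)).
have UX : (U <= <<X>>)%VS by rewrite /= span_cons (span_basis (vbasisP U)) addvSr.
exists (coord X ord0 \o projv <<X>>); split => /= [|u Uu].
  rewrite projv_id ?memv_span ?mem_head //.
  by have := coord_free ord0 ord0 freeX; rewrite eqxx.
rewrite projv_id ?(subvP UX) // (coord_vbasis Uu) linear_sum big1 // => i _.
rewrite linearZ /=.
have -> : (vbasis U)`_i = X`_(lift ord0 i) by rewrite lift0.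
by rewrite coord_free // eq_sym (negbTE (neq_lift _ _)) mulr0.
Qed.

Section Matrices.
Variables (F : fieldType) (n : nat).
Local Notation vec := 'cV[F]_n.
Local Notation mat := 'M[F]_n.

Lemma mprod_cat (s t : seq mat) : mprod (s ++ t) = mprod s *m mprod t.
Proof. by elim: s => [|a s IH] /=; rewrite ?mul1mx // IH mulmxA. Qed.

Lemma mx_eq0_of_annihilator m (A : 'M[F]_(m, n)) :
  (forall v : vec, A *m v = 0) -> A = 0.
Proof.
move=> A0; apply/matrixP => i j; have := A0 (delta_mx j 0).
by rewrite -colE => /matrixP/(_ i 0); rewrite !mxE.
Qed.

Lemma row_of_scalar (g : {scalar vec}) :
  exists r : 'rV_n, forall v, r *m v = (g v)%:M.
Proof.
exists (\row_j g (delta_mx j 0)) => v.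
rewrite [X in g X]matrix_sum_delta linear_sum [LHS]mx11_scalar; congr _%:M.
rewrite !mxE; apply: eq_bigr => j _.
by rewrite big_ord1 linearZ /= !mxE mulrC.
Qed.

Lemma exists_rank_one_mx (U : {vspace vec}) (x w : vec) : x \notin U ->
  exists a : mat, [/\ a *m x = w, {in U, forall u, a *m u = 0}
                    & forall v, a *m v \in <[w]>%VS].
Proof.
move=> xU; have [g [gx gU]] := exists_scalar_separating xU.
have [r rg] := row_of_scalar g.
exists (w *m r); split => [|u Uu|v]; rewrite -mulmxA rg mul_mx_scalar.
- by rewrite gx scale1r.
- by rewrite gU ?scale0r.
- exact: memvZ (memv_line w).
Qed.

End Matrices.

Section Powers.
Variables (F : fieldType) (n : nat) (S : mset F n).
Local Notation vec := 'cV[F]_n.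

Lemma Spow0 (v : vec) : Spow S 0 v.
Proof. by exists [::], v; split => //; rewrite /= mul1mx. Qed.

Lemma Spow_cons a i (v : vec) : S a -> Spow S i v -> Spow S i.+1 (a *m v).
Proof.
move=> Sa [s [w [sz Ss ->]]]; exists (a :: s), w; split => /=.
- by rewrite sz.
- by move=> b; rewrite in_cons => /predU1P [-> // | /Ss].
- by rewrite mulmxA.
Qed.

Lemma Spow_uncons i (v : vec) :
  Spow S i.+1 v -> exists a y, [/\ S a, Spow S i y & v = a *m y].
Proof.
move=> [[|a s] [w [//= [sz] Ss ->]]].
exists a, (mprod s *m w); split; last by rewrite mulmxA.
- by apply: Ss; rewrite mem_head.
- by exists s, w; split => // b sb; apply: Ss; rewrite in_cons sb orbT.
Qed.

Lemma Spow_leq i j (v : vec) : (i <= j)%N -> Spow S j v -> Spow S i v.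
Proof.
move=> ij [s [w [sz Ss ->]]]; exists (take i s), (mprod (drop i s) *m w); split.
- by rewrite size_takel // sz.
- by move=> b /mem_take /Ss.
- by rewrite mulmxA -mprod_cat cat_take_drop.
Qed.

Lemma Spow_subset (T : mset F n) i (v : vec) :
  (forall a, S a -> T a) -> Spow S i v -> Spow T i v.
Proof. by move=> ST [s [w [sz Ss ->]]]; exists s, w; split => // b /Ss /ST. Qed.

End Powers.

Section Span.
Variables (F : fieldType) (n : nat).
Local Notation vec := 'cV[F]_n.

Lemma span_ofE (X : vec -> Prop) (V : {vspace vec}) : is_span X V -> span_of X = V.
Proof.
move=> XV; have [XS minS] : is_span X (span_of X) :=
  epsilon_spec (inhabits 0%VS) (is_span X) (ex_intro _ V XV).
by apply/subv_anti; rewrite (minS V XV.1) (XV.2 _ XS).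
Qed.

Lemma span_grows (X : vec -> Prop) (s : seq vec) :
  ~ (forall x, X x -> x \in <<s>>%VS) ->
  exists2 x, X x & (\dim <<s>> < \dim <<x :: s>>)%N.
Proof.
move=> /not_all_ex_not [x /(imply_to_and (X x)) [Xx /negP xs]].
exists x => //.
rewrite span_cons ltn_neqAle dimvS ?addvSr // andbT.
apply: contra xs; rewrite (dimv_leqif_sup (addvSr <[x]> <<s>>)).2 => /subvP.
by apply; rewrite memvE addvSl.
Qed.

Lemma is_span_span (X : vec -> Prop) (s : seq vec) :
  (forall x, x \in s -> X x) -> (forall x, X x -> x \in <<s>>%VS) ->
  is_span X <<s>>%VS.
Proof. by move=> sX Xs; split=> // W XW; apply/span_subvP => x /sX /XW. Qed.

Lemma span_exists (X : vec -> Prop) : exists V, is_span X V.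
Proof.
suff grow m (s : seq vec) : (forall x, x \in s -> X x) ->
    (\dim (fullv : {vspace vec}) - \dim <<s>> <= m)%N -> exists V, is_span X V.
  by apply: (grow _ [::]) => //; rewrite leq_subr.
elim: m s => [|m IH] s sX sm;
  have [Xs | /span_grows [x Xx lt]] := classic (forall x, X x -> x \in <<s>>%VS);
  try by exists <<s>>%VS; apply: is_span_span.
all: have : (\dim <<x :: s>> <= \dim (fullv : {vspace vec}))%N by rewrite dimvS ?subvf.
- by lia.
- move=> le; apply: (IH (x :: s)); last by lia.
  by move=> y /predU1P [-> | /sX].
Qed.

Lemma span_ofP (X : vec -> Prop) : is_span X (span_of X).
Proof. by have [V XV] := span_exists X; rewrite (span_ofE XV). Qed.

End Span.

Section FlagToSemigroup.
Variables (F : fieldType) (n k : nat) (f : flagT F n k).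
Hypothesis flag_f : is_flag f.
Local Notation mat := 'M[F]_n.

Lemma fl0 : fl f 0 = 0%VS. Proof. by case: flag_f. Qed.

Lemma flk : fl f k = fullv. Proof. by case: flag_f. Qed.

Lemma fl_mono i j : (i <= j <= k)%N -> (fl f i <= fl f j)%VS.
Proof.
case: flag_f => _ _ step /andP [ij jk]; elim: j ij jk => [|j IH] ij jk.
  by rewrite leqn0 in ij; rewrite (eqP ij).
case: (ltngtP i j.+1) ij => // [ij | -> //] _.
exact: subv_trans (IH ij (ltnW jk)) (step j jk).1.
Qed.

Lemma fl_step_witness i : (i < k)%N -> exists2 z, z \in fl f i.+1 & z \notin fl f i.
Proof.
case: flag_f => _ _ /(_ i) step /step [_ /subvPn [z]]; by exists z.
Qed.

Lemma exists_phi_mulmx p x w : (p <= k)%N -> x \notin fl f p -> w \in fl f p ->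
  exists2 a : mat, phi f a & a *m x = w.
Proof.
move=> pk xV wV; have [a [ax aV aw]] := exists_rank_one_mx w xV.
exists a => // i /andP [i1 ik] v vV; case: (leqP i p) => ip.
  by rewrite aV ?mem0v // (subvP (@fl_mono i p _)) ?ip.
by apply: subvP (aw v); rewrite -memvE (subvP (@fl_mono p i.-1 _)) //; lia.
Qed.

Lemma phi_stable a i v : phi f a -> (i <= k)%N -> v \in fl f i -> a *m v \in fl f i.
Proof.
case: i => [|i] fa ik vV.
  by move: vV; rewrite fl0 memv0 => /eqP ->; rewrite mulmx0 mem0v.
by apply: (subvP (@fl_mono i i.+1 _)); [rewrite leqnSn | exact: fa i.+1 ik v vV].
Qed.

Lemma phi_mprod (s : seq mat) i v : {in s, forall a, phi f a} ->
  (size s <= i <= k)%N -> v \in fl f i -> mprod s *m v \in fl f (i - size s).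
Proof.
elim: s => [|a s IH] /= sphi; first by rewrite mul1mx subn0.
move=> /andP [si ik] vV.
have fa : phi f a by apply: sphi; rewrite mem_head.
rewrite -mulmxA subnS; apply: (fa (i - size s)%N); first lia.
by apply: IH; [move=> b sb; apply: sphi; rewrite in_cons sb orbT | lia |].
Qed.

Lemma Spow_phi_fl j v : (j <= k)%N -> v \in fl f j -> Spow (phi f) (k - j) v.
Proof.
move=> jk; move tE : (k - j)%N => t.
elim: t j v jk tE => [|t IH] j v jk tE vV; first exact: Spow0.
have [|z zV zV'] := @fl_step_witness j; first lia.
have [a fa <-] := exists_phi_mulmx jk zV' vV.
apply: Spow_cons fa (IH j.+1 z _ _ zV); lia.
Qed.

Hypothesis k_gt0 : (0 < k)%N.

Lemma phi_nilpotent : nilpotent_of_degree (phi f) k.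
Proof.
split.
- move=> a b fa fb i i1k v vV; rewrite -mulmxA.
  by apply: phi_stable fa _ (fb i i1k v vV); lia.
- move=> s sz sphi; apply: mx_eq0_of_annihilator => v; apply/eqP.
  have := @phi_mprod s k v sphi; rewrite sz leqnn subnn fl0 memv0 flk memvf.
  exact.
- have [z zV zV'] := fl_step_witness k_gt0.
  have [s [w [sz sphi zE]]] := Spow_phi_fl k_gt0 zV.
  exists s; split=> //; first by rewrite sz; lia.
  by apply: contraNneq zV' => s0; rewrite zE s0 mul0mx mem0v.
Qed.

Lemma Spow_sup_phi_fl (T : mset F n) t x :
  nilpotent_of_degree T k -> (forall a, phi f a -> T a) ->
  (t <= k)%N -> Spow T (k - t) x -> x \in fl f t.
Proof.
move=> [_ Tnil _] phiT; elim: t x => [|t IH] x tk.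
  by rewrite subn0 => -[s [w [sz sT ->]]]; rewrite Tnil // mul0mx mem0v.
move=> Tx; apply: contraT => xV.
have [z zV zV'] := fl_step_witness tk.
have [a /phiT Ta az] := exists_phi_mulmx tk xV zV.
apply: contraNT zV' => _; apply: IH (ltnW tk) _.
by rewrite -az -subSS subSn //; apply: Spow_cons.
Qed.

Lemma phi_maximal (T : mset F n) : nilpotent_of_degree T k ->
  (forall a, phi f a -> T a) -> forall a, T a -> phi f a.
Proof.
move=> Tnil phiT a Ta i /andP [i1 ik] v vV.
have Tav : Spow T (k - i.-1) (a *m v).
  have -> : (k - i.-1 = (k - i).+1)%N by lia.
  exact/Spow_cons/(Spow_subset phiT)/(Spow_phi_fl ik).
by apply: Spow_sup_phi_fl Tnil phiT _ Tav; lia.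
Qed.

Lemma psi_phi : psi k (phi f) = f.
Proof.
apply/ffunP => j; have -> : f j = fl f j by rewrite /fl inord_val.
rewrite ffunE.
have jk : (j <= k)%N by rewrite -ltnS.
case: ifP => [/eqP -> | _]; first by rewrite fl0.
case: ifP => [/eqP -> | _]; first by rewrite flk.
apply: span_ofE; split=> [_ [s [w [sz sphi ->]]] | W phiW].
- have := @phi_mprod s k w sphi; rewrite sz leq_subr leqnn flk memvf subKn //.
  exact.
- by apply/subvP => v vV; apply/phiW/(Spow_phi_fl jk).
Qed.

End FlagToSemigroup.

Section SemigroupToFlag.
Variables (F : fieldType) (n k : nat) (S : mset F n).
Local Notation vec := 'cV[F]_n.
Local Notation W i := (span_of (Spow S i)).

Lemma mem_W i (v : vec) : Spow S i v -> v \in W i.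
Proof. exact: (span_ofP _).1. Qed.

Lemma W_min i (U : {vspace vec}) : (forall v, Spow S i v -> v \in U) -> (W i <= U)%VS.
Proof. exact: (span_ofP _).2. Qed.

Lemma W0 : W 0 = fullv.
Proof. by apply/eqP; rewrite eqEsubv subvf; apply/subvP => v _; apply/mem_W/Spow0. Qed.

Lemma W_anti i j : (i <= j)%N -> (W j <= W i)%VS.
Proof. by move=> ij; apply: W_min => v /(Spow_leq ij) /mem_W. Qed.

Lemma mulmx_W a i x : S a -> x \in W i -> a *m x \in W i.+1.
Proof.
move=> Sa xW; have : (W i <= linfun (@mulmx F n n 1 a) @^-1: W i.+1)%VS.
  by apply: W_min => y Sy; rewrite -memv_preim lfunE; apply/mem_W/Spow_cons.
by move/subvP/(_ x xW); rewrite -memv_preim lfunE.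
Qed.

Hypothesis nilS : nilpotent_of_degree S k.

Lemma W_eq0 i : (k <= i)%N -> W i = 0%VS.
Proof.
case: nilS => _ Snil _ ki; apply/eqP; rewrite -subv0.
apply: W_min => _ [s [w [sz Ss ->]]].
rewrite -(cat_take_drop k s) mprod_cat Snil ?mul0mx ?mem0v ?size_takel ?sz //.
by move=> b /mem_take /Ss.
Qed.

Lemma W_strict i : (i < k)%N -> ~~ (W i <= W i.+1)%VS.
Proof.
move=> ik; apply/negP => Wi_stable.
have Wi_stableD t : (W (i + t) <= W (i + t).+1)%VS.
  elim: t => [|t IH]; first by rewrite addn0.
  apply: W_min => v; rewrite addnS => /Spow_uncons [a [y [Sa Sy ->]]].
  by apply: mulmx_W Sa (subvP IH _ (mem_W Sy)).
have Wi0 : W i = 0%VS.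
  apply/eqP; rewrite -subv0 -(W_eq0 (leqnn k)) -(subnKC (ltnW ik)).
  elim: (k - i)%N => [|t IH]; first by rewrite addn0.
  by rewrite addnS; apply: subv_trans IH (Wi_stableD t).
case: nilS => _ _ [s [sz Ss]]; apply/negP/negPn/eqP/mx_eq0_of_annihilator => v.
apply/eqP; rewrite -memv0 -Wi0; apply: (subvP (@W_anti i k.-1 _)); first lia.
by apply: mem_W; exists s, v.
Qed.

Lemma fl_psi i : (i <= k)%N -> fl (psi k S) i = W (k - i).
Proof.
move=> ik; rewrite /fl /psi ffunE inordK ?ltnS //.
case: ifP => [/eqP -> | _]; first by rewrite subn0 W_eq0.
by case: ifP => [/eqP -> | _ //]; rewrite subnn W0.
Qed.

Lemma psi_flag : is_flag (psi k S).
Proof.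
split=> [|| i ik]; first by rewrite fl_psi // subn0 W_eq0.
  by rewrite fl_psi // subnn W0.
rewrite !fl_psi ?(ltnW ik) // -[(k - i)%N](@subnSK i k) //.
by split; [apply: W_anti | apply: W_strict; lia].
Qed.

Lemma sub_phi_psi a : S a -> phi (psi k S) a.
Proof.
move=> Sa i /andP [i1 ik] v; rewrite !fl_psi; try lia.
have -> : (k - i.-1 = (k - i).+1)%N by lia.
exact: mulmx_W.
Qed.

End SemigroupToFlag.

Theorem corollary9 (F : fieldType) (n k : nat) :
  (1 <= n)%N -> (2 <= k)%N ->
  (forall f : flagT F n k, is_flag f ->
      k_maximal (phi f) k /\ psi k (phi f) = f) /\
  (forall S : mset F n, k_maximal S k ->
      is_flag (psi k S) /\ phi (psi k S) = S).
Proof.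
move=> _ /ltnW k_gt0; split=> [f flag_f | S [nilS maxS]].
  split; last exact: psi_phi.
  by split; [exact: phi_nilpotent | exact: phi_maximal].
have flag_psi := psi_flag nilS; split=> //.
apply: functional_extensionality => a; apply: propositional_extensionality.
split=> [phi_a | /(sub_phi_psi nilS) //].
exact: maxS _ (phi_nilpotent flag_psi k_gt0) (sub_phi_psi nilS) a phi_a.
Qed.
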